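(* Let $P$ and $Q$ be probability measures on a measurable space $(\mathcal{X},\mathcal{A})$ with densities $f$ and $g$, respectively, with respect to a measure $\mu$ on $(\mathcal{X},\mathcal{A})$. Suppose that $g/f \le \rho$ for some number $\rho \in [1,\infty)$. (a) For any non-decreasing function $\psi : [0,\infty) \to \mathbb{R}$ with $\psi(1) = 0$, \[ \int \psi(g/f) \, dQ \ \le \ Q(\{g > f\}) \, \psi(\rho) . \] (b) For any convex function $\psi : [0,\infty) \to \mathbb{R}$, \[ \int \psi(g/f) \, dP \ \le \ \psi(0) + \frac{\psi(\rho) - \psi(0)}{\rho} . \] Both inequalities are equalities if $g/f$ takes only values in $\{0,\rho\}$.
   Context: Ratios use the conventions $0/0 := 0$ and $a/0 := \infty$ for $a > 0$. *)

From HB Require Import structures.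
From mathcomp Require Import all_boot all_order all_algebra.
From mathcomp Require Import all_classical all_reals all_analysis.
Set Implicit Arguments. Unset Strict Implicit. Unset Printing Implicit Defensive.
Import Order.TTheory GRing.Theory Num.Theory.
Local Open Scope ring_scope.

Definition dratio (R : realType) (a b : R) : \bar R :=
  if b == 0 then (if a == 0 then 0%E else +oo%E) else (a / b)%:E.

From HB Require Import structures.
From mathcomp Require Import all_boot all_order all_algebra.
From mathcomp Require Import all_classical all_reals all_analysis.
From mathcomp Require Import measurable_realfun lebesgue_measure lebesgue_integral.
From mathcomp Require Import ring lra.

(* Let r := g/f, with 0/0 = 0.  Since g/f <= rho < +oo, g vanishes where f
   does, so r is a version of dQ/dP and \int r dP = Q(X) = 1.
   (a) On {g <= f} we have r <= 1, hence psi(r) <= psi(1) = 0, while r <= rho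
   everywhere: psi(r) <= psi(rho) 1_{g > f} pointwise.
   (b) On [0, rho] a convex psi lies below its chord, so
   psi(r) <= psi(0) + (psi(rho) - psi(0)) r / rho; integrate against P.
   If r only takes the values 0 and rho, both pointwise bounds are equalities,
   up to the Q-null set {g = 0} in (a). *)

Set Implicit Arguments.
Unset Strict Implicit.
Unset Printing Implicit Defensive.

Import Order.TTheory GRing.Theory Num.Theory.
Local Open Scope classical_set_scope.
Local Open Scope ring_scope.

Section integral_density.
Local Open Scope ereal_scope.
Context d (T : measurableType d) (R : realType).
Variables (mu nu : {measure set T -> \bar R}) (g : T -> R).
Hypotheses (mg : measurable_fun setT g) (g_ge0 : forall x, (0 <= g x)%R)
  (nuE : forall A, measurable A -> nu A = \int[mu]_(x in A) (g x)%:E).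

Import HBNNSimple.

Lemma integral_density_indic E A : measurable E -> measurable A ->
  \int[mu]_(x in E) ((\1_A x)%:E * (g x)%:E) = \int[nu]_(x in E) (\1_A x)%:E.
Proof.
move=> mE mA; rewrite integral_indic// nuE; last exact: measurableI.
rewrite setIC integral_mkcondr; apply: eq_integral => x _.
by rewrite epatch_indic muleC.
Qed.

Lemma integral_density_nnsfun (h : {nnsfun T >-> R}) E : measurable E ->
  \int[mu]_(x in E) ((h x)%:E * (g x)%:E) = \int[nu]_(x in E) (h x)%:E.
Proof.
move=> mE; pose A y := h @^-1` [set y].
have h_sum x : (h x)%:E = \sum_(y \in range h) y%:E * (\1_(A y) x)%:E.
  by rewrite fimfunE -fsumEFin//; apply: eq_fsbigr => y _; rewrite EFinM.
have mA y : measurable (A y) by rewrite -[A y]setTI; exact: measurable_funP1.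
have ind_ge0 y x : 0 <= y%:E * (\1_(A y) x)%:E by exact: nnfun_muleindic_ge0.
have m_ind y : measurable_fun E (fun x => (\1_(A y) x : R)%:E).
  by apply/measurable_EFinP; exact: measurable_indic.
have mgE : measurable_fun E (fun x => (g x)%:E).
  by apply/measurable_EFinP; exact: measurable_funTS.
under eq_integral do rewrite h_sum ge0_mule_fsuml//.
under [RHS]eq_integral do rewrite h_sum.
rewrite !ge0_integral_fsum//; last 3 first.
- by move=> y; exact: emeasurable_funM.
- by move=> y; apply: emeasurable_funM => //; exact: emeasurable_funM.
- by move=> y x _; rewrite mule_ge0 ?ind_ge0 ?lee_fin.
apply: eq_fsbigr => ? /set_mem[y _ <-].
under eq_integral do rewrite -muleA.
rewrite !ge0_integralZl ?lee_fin// ?integral_density_indic//.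
- exact: emeasurable_funM.
- by move=> x _; rewrite mule_ge0 ?lee_fin.
Qed.

Lemma integral_density (h : T -> \bar R) E : measurable E ->
    (forall x, 0 <= h x) -> measurable_fun E h ->
  \int[mu]_(x in E) (h x * (g x)%:E) = \int[nu]_(x in E) h x.
Proof.
move=> mE h_ge0 mh; pose s := nnsfun_approx mE mh.
have s_cvg x : E x -> (s n x)%:E @[n --> \oo] --> h x.
  by move=> Ex; exact: cvg_nnsfun_approx.
have s_nd x : E x -> {homo (fun n => (s n x)%:E) : m n / (m <= n)%N >-> m <= n}.
  by move=> Ex m n mn; rewrite lee_fin; exact/lefP/nd_nnsfun_approx.
have ms n : measurable_fun E (fun x => (s n x)%:E).
  by apply/measurable_EFinP; exact: measurable_funTS.
have mgE : measurable_fun E (fun x => (g x)%:E).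
  by apply/measurable_EFinP; exact: measurable_funTS.
transitivity (lim (\int[mu]_(x in E) ((s n x)%:E * (g x)%:E) @[n --> \oo])).
  rewrite -monotone_convergence//.
  - apply: eq_integral => x /set_mem Ex; apply/esym/cvg_lim => //.
    exact: cvgeZr (s_cvg x Ex).
  - by move=> n; exact: emeasurable_funM.
  - by move=> n x _; rewrite mule_ge0 ?lee_fin.
  - by move=> x Ex m n mn; rewrite lee_wpmul2r ?lee_fin//; exact: s_nd.
under eq_fun do rewrite integral_density_nnsfun//.
rewrite -monotone_convergence//; last by move=> n x _; rewrite lee_fin.
by apply: eq_integral => x /set_mem Ex; apply/cvg_lim => //; exact: s_cvg.
Qed.
End integral_density.

Section real_measurable.
Context (R : realType).
Implicit Types (D : set R) (psi : R -> R).

Lemma interval_sublevel_measurable D psi : measurable D ->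
  (forall a, is_interval (D `&` psi @^-1` `]-oo, a[)) -> measurable_fun D psi.
Proof.
move=> mD psi_itv; apply: (measurability (@RGenInftyO.G R)).
  exact: RGenInftyO.measurableE.
by move=> _ [_ [a ->] <-]; exact: is_interval_measurable.
Qed.

Lemma in_nondecreasing_measurable D psi : measurable D -> is_interval D ->
  {in D &, {homo psi : x y / x <= y}} -> measurable_fun D psi.
Proof.
move=> mD iD psi_nd; apply: interval_sublevel_measurable => // a x y [Dx _].
move=> [Dy]; rewrite /= !in_itv /= => psiy_a z xzy.
have Dz : D z by exact: iD xzy.
split=> //=; rewrite in_itv /= (le_lt_trans _ psiy_a)// psi_nd ?inE//.
by case/andP: xzy.
Qed.

Lemma in_nonincreasing_measurable D psi : measurable D -> is_interval D ->
  {in D &, {homo psi : x y /~ x <= y}} -> measurable_fun D psi.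
Proof.
move=> mD iD psi_ni; rewrite -[psi]opprK; apply: measurable_funN.
by apply: in_nondecreasing_measurable => // x y Dx Dy xy; rewrite lerN2 psi_ni.
Qed.

Lemma measurable_inv : measurable_fun setT (@GRing.inv R).
Proof.
have -> : [set: R] = `]-oo, 0[ `|` [set 0] `|` `]0, +oo[.
  apply/seteqP; split=> // x _ /=; rewrite !in_itv /= andbT.
  by case: (ltgtP x 0) => [|x_gt0|->]; [left; left|right|left; right].
apply/measurable_funU => //; first exact: measurableU.
split; first (apply/measurable_funU => //; split).
- apply: in_nonincreasing_measurable => //; first exact: interval_is_interval.
  move=> x y; rewrite !inE /= !in_itv /= => x_lt0 y_lt0 xy.
  by rewrite lef_nV2 ?negrE.
- exact: measurable_fun_set1.
- apply: in_nonincreasing_measurable => //; first exact: interval_is_interval.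
  move=> x y; rewrite !inE /= !in_itv /= !andbT => x_gt0 y_gt0 xy.
  by rewrite lef_pV2 ?posrE.
Qed.
End real_measurable.

Section convex_real.
Context (R : realType).
Implicit Types (D : set R) (psi : R -> R).

Lemma convex_le_chord {D psi x y z} :
  convex_function (D : set R^o) (psi : R^o -> R^o) ->
  x \in D -> y \in D -> x < y -> x <= z <= y ->
  psi z <= psi x + (psi y - psi x) / (y - x) * (z - x).
Proof.
move=> cvx Dx Dy xy /andP[xz zy].
have yx_neq0 : y - x != 0 by rewrite subr_eq0 gt_eqF.
have yx_gt0 : 0 < y - x by rewrite subr_gt0.
pose t := (y - z) / (y - x).
have t_ge0 : 0 <= t by rewrite /t divr_ge0 ?subr_ge0 ?(ltW xy).
have t_le1 : t <= 1 by rewrite /t ler_pdivrMr // mul1r lerD2l lerN2.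
have cvx_t : psi (t * x + (1 - t) * y) <= t * psi x + (1 - t) * psi y.
  exact: cvx (Itv01 t_ge0 t_le1) x y Dx Dy.
have -> : psi x + (psi y - psi x) / (y - x) * (z - x) =
    t * psi x + (1 - t) * psi y by rewrite /t; field.
by have -> : z = t * x + (1 - t) * y by rewrite /t; field.
Qed.

Lemma convex_sublevel_is_interval D psi (a : R) : is_interval D ->
    convex_function (D : set R^o) (psi : R^o -> R^o) ->
  is_interval (D `&` psi @^-1` `]-oo, a[).
Proof.
move=> iD cvx x y [Dx] + [Dy] + z xzy; rewrite /= !in_itv /= => psix_a psiy_a.
have Dz := iD _ _ Dx Dy _ xzy.
split=> //; have /andP[xz zy] := xzy.
have [xy|yx] := ltP x y; last first.
  by have -> : z = x by apply/le_anti; rewrite xz (le_trans zy yx).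
apply: (le_lt_trans (convex_le_chord cvx (mem_set Dx) (mem_set Dy) xy xzy)).
have yx_gt0 : 0 < y - x by rewrite subr_gt0.
rewrite mulrAC -mulrA; set s := (z - x) / (y - x).
have s_ge0 : 0 <= s by rewrite /s divr_ge0 ?subr_ge0 ?(ltW xy).
have s_le1 : s <= 1 by rewrite /s ler_pdivrMr // mul1r lerD2r.
have [] := leP (psi x) (psi y) => ?; nra.
Qed.

Lemma convex_measurable D psi : measurable D -> is_interval D ->
  convex_function (D : set R^o) (psi : R^o -> R^o) -> measurable_fun D psi.
Proof.
move=> mD iD cvx; apply: interval_sublevel_measurable => // a.
exact: convex_sublevel_is_interval.
Qed.

End convex_real.

Section integral_bounds.
Local Open Scope ereal_scope.
Context d (T : measurableType d) (R : realType).

Lemma le_integral_measurable (mu : {measure set T -> \bar R}) D (h k : T -> \bar R) :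
  measurable D -> measurable_fun D h -> measurable_fun D k ->
  (forall x, D x -> h x <= k x) ->
  \int[mu]_(x in D) h x <= \int[mu]_(x in D) k x.
Proof.
move=> mD mh mk hk.
have {}hk : {in D, forall x, h x <= k x} by move=> x /set_mem; exact: hk.
rewrite integralE [leRHS]integralE leeB//.
- apply: ge0_le_integral => //; try exact: measurable_funepos.
  by move=> x /mem_set; exact: funepos_le hk x.
- apply: ge0_le_integral => //; try exact: measurable_funeneg.
  by move=> x /mem_set; exact: funeneg_le hk x.
Qed.

Lemma bounded_integrable (m : {finite_measure set T -> \bar R}) (h : T -> R) (M : R) :
  measurable_fun setT h -> (forall x, `|h x| <= M)%R ->
  m.-integrable setT (EFin \o h).
Proof.
move=> mh h_le; apply: measurable_bounded_integrable => //.
  by rewrite -ge0_fin_numE ?measure_ge0// fin_num_measure.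
exists M; split; first exact: num_real.
by move=> N MN x _; exact: le_trans (h_le x) (ltW MN).
Qed.

End integral_bounds.

Section probability_integral.
Local Open Scope ereal_scope.
Context d (T : measurableType d) (R : realType) (P : probability T R).

Lemma integralZl_indic_probability (c : R) A : measurable A ->
  \int[P]_x (c * \1_A x)%:E = c%:E * P A.
Proof.
move=> mA; under eq_integral do rewrite EFinM.
by rewrite integralZl ?integrable_indic// integral_indic// setIT.
Qed.

Lemma integral_affine (h : T -> R) (a b M : R) :
  measurable_fun setT h -> (forall x, `|h x| <= M)%R ->
  \int[P]_x (a + b * h x)%:E = a%:E + b%:E * \int[P]_x (h x)%:E.
Proof.
move=> mh h_le; under eq_integral do rewrite EFinD EFinM.
rewrite integralD//; last 2 first.
- exact: (bounded_integrable P (h := cst a) (M := `|a|)).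
- exact/integrableZl/(bounded_integrable P mh h_le).
have P1 : ((P : {measure set T -> \bar R}) setT = 1)%E by exact: probability_setT.
rewrite integralZl ?integral_cst ?P1 ?mule1//; exact (bounded_integrable P mh h_le).
Qed.

End probability_integral.

(* Where f x = 0 this is g x * 0^-1 = 0, as MathComp sets 0^-1 = 0. *)
Definition density_ratio (T : Type) (R : realType) (f g : T -> R) x := g x / f x.

Section likelihood_ratio.
Context d (X : measurableType d) (R : realType).
Variables (mu : {measure set X -> \bar R}) (P Q : probability X R).
Variables (f g : X -> R) (rho : R).
Hypotheses (mf : measurable_fun setT f) (mg : measurable_fun setT g).
Hypotheses (f_ge0 : forall x, 0 <= f x) (g_ge0 : forall x, 0 <= g x).
Hypothesis PE : forall A, measurable A -> P A = (\int[mu]_(x in A) (f x)%:E)%E.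
Hypothesis QE : forall A, measurable A -> Q A = (\int[mu]_(x in A) (g x)%:E)%E.
Hypothesis rho_ge1 : 1 <= rho.
Hypothesis dratio_le : forall x, (dratio (g x) (f x) <= rho%:E)%E.
Implicit Types psi : R -> R.

Let rho_gt0 : 0 < rho. Proof. exact: lt_le_trans rho_ge1. Qed.

Local Notation ratio := (density_ratio f g).

Lemma f_eq0_g_eq0 x : f x = 0 -> g x = 0.
Proof.
move=> fx0; move: (dratio_le x); rewrite /dratio fx0 eqxx.
by case: eqP => // _; rewrite leye_eq.
Qed.

Lemma fine_dratio x : fine (dratio (g x) (f x)) = ratio x.
Proof.
rewrite /dratio /density_ratio; case: eqP => [fx0|//].
by rewrite f_eq0_g_eq0// eqxx fx0 invr0 mulr0.
Qed.

Lemma ratio_ge0 x : 0 <= ratio x.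
Proof. exact: divr_ge0. Qed.

Lemma ratio_le x : ratio x <= rho.
Proof.
rewrite -fine_dratio; move: (dratio_le x); rewrite /dratio.
case: eqP => _; last by rewrite lee_fin.
by case: eqP => _ //=; rewrite ltW.
Qed.

Lemma ratio_le1 x : g x <= f x -> ratio x <= 1.
Proof.
move=> gf; rewrite /density_ratio; have [fx0|fx0] := eqVneq (f x) 0.
  by rewrite fx0 invr0 mulr0.
by rewrite ler_pdivrMr ?mul1r // lt_neqAle eq_sym fx0 f_ge0.
Qed.

Lemma measurable_ratio : measurable_fun setT ratio.
Proof.
by apply: measurable_funM => //; apply: measurableT_comp mf; exact: measurable_inv.
Qed.

Lemma integral_ratio : (\int[P]_x (ratio x)%:E = 1)%E.
Proof.
rewrite -(integral_density mf f_ge0 PE) //; last 2 first.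
- by move=> x; rewrite lee_fin ratio_ge0.
- exact/measurable_EFinP/measurable_ratio.
transitivity (\int[mu]_x (g x)%:E)%E; last by rewrite -QE// probability_setT.
apply: eq_integral => x _; rewrite -EFinM /density_ratio; congr EFin.
have [fx0|fx0] := eqVneq (f x) 0; first by rewrite fx0 f_eq0_g_eq0// !mul0r.
by rewrite divfK.
Qed.

Lemma integral_affine_ratio (a b : R) :
  (\int[P]_x (a + b * ratio x)%:E = (a + b)%:E)%E.
Proof.
rewrite (integral_affine _ _ _ measurable_ratio (M := rho)) ?integral_ratio ?mule1//.
by move=> x; rewrite ger0_norm ?ratio_ge0 ?ratio_le.
Qed.

Lemma measurable_f_lt_g : measurable [set x | f x < g x].
Proof.
rewrite (_ : [set x | _] = [set: X] `&` (g \- f) @^-1` `]0, +oo[).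
  by apply: measurable_funB => //; exact: measurable_itv.
by apply/seteqP; split => x /=; rewrite in_itv /= andbT subr_gt0 => // -[].
Qed.

Lemma measurable_comp_ratio psi :
  measurable_fun (`[0, +oo[%classic : set R) psi ->
  measurable_fun setT (psi \o ratio).
Proof.
move=> mpsi; apply: measurable_comp (measurable_itv _) _ mpsi measurable_ratio.
by move=> _ [x _ <-]; rewrite /= in_itv /= andbT ratio_ge0.
Qed.

Lemma integral_nondecreasing_ratio_le psi :
  {in `[0, +oo[ &, {homo psi : s t / s <= t}} -> psi 1 = 0 ->
  (\int[Q]_x (psi (ratio x))%:E <= Q [set x | (f x < g x)%R] * (psi rho)%:E)%E.
Proof.
move=> psi_nd psi1.
have mpsi : measurable_fun (`[0, +oo[%classic : set R) psi.
  apply: in_nondecreasing_measurable => //; first exact: interval_is_interval.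
  by move=> x y; rewrite !inE; exact: psi_nd.
rewrite muleC -integralZl_indic_probability; last exact: measurable_f_lt_g.
apply: le_integral_measurable => //.
- exact/measurable_EFinP/measurable_comp_ratio.
- apply/measurable_EFinP/measurable_funM => //.
  exact/measurable_indic/measurable_f_lt_g.
move=> x _; rewrite lee_fin indicE.
have ratio_itv y : ratio y \in `[0, +oo[ by rewrite in_itv /= andbT ratio_ge0.
have rho_itv : rho \in `[0, +oo[ by rewrite in_itv /= andbT ltW.
have one_itv : (1 : R) \in `[0, +oo[ by rewrite in_itv /= andbT.
have [_|xA] := boolP (x \in [set x | f x < g x]).
  by rewrite mulr1 psi_nd ?ratio_le.
rewrite mulr0 -psi1 psi_nd ?ratio_le1//.
by move: xA; rewrite notin_setE /= => /negP; rewrite -leNgt.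
Qed.

Lemma integral_convex_ratio_le psi :
  convex_function (`[0, +oo[%classic : set R^o) (psi : R^o -> R^o) ->
  (\int[P]_x (psi (ratio x))%:E <= (psi 0 + (psi rho - psi 0) / rho)%:E)%E.
Proof.
move=> cvx.
have mpsi : measurable_fun (`[0, +oo[%classic : set R) psi.
  exact (convex_measurable (measurable_itv _) (@interval_is_interval R _) cvx).
rewrite -integral_affine_ratio; apply: le_integral_measurable => //.
- exact/measurable_EFinP/measurable_comp_ratio.
- apply/measurable_EFinP/measurable_funD => //.
  exact/measurable_funM/measurable_ratio.
move=> x _; rewrite lee_fin.
have Dx y : 0 <= y -> y \in (`[0, +oo[%classic : set R).
  by move=> y_ge0; rewrite inE /= in_itv /= andbT.
have := convex_le_chord (z := ratio x) cvx (Dx _ (lexx 0)) (Dx _ (ltW rho_gt0)).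
by rewrite !subr0; apply; rewrite // ratio_ge0 ratio_le.
Qed.

Lemma ratio_eq0 x : ratio x = 0 -> g x = 0.
Proof.
rewrite /density_ratio => /eqP; rewrite mulf_eq0 invr_eq0 => /orP[] /eqP //.
exact: f_eq0_g_eq0.
Qed.

Section two_valued_ratio.
Hypothesis ratio_two_valued : forall x, ratio x = 0 \/ ratio x = rho.

Lemma integral_two_valued_ratio_P psi :
  (\int[P]_x (psi (ratio x))%:E = (psi 0 + (psi rho - psi 0) / rho)%:E)%E.
Proof.
rewrite -integral_affine_ratio; apply: eq_integral => x _; congr EFin.
case: (ratio_two_valued x) => ->; first by rewrite mulr0 addr0.
by rewrite divfK ?gt_eqF // addrC subrK.
Qed.

Lemma two_valued_ratio_indicE psi x : psi 1 = 0 ->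
  psi (ratio x) =
  psi rho * \1_[set x | f x < g x] x + psi 0 * \1_[set x | g x = 0] x.
Proof.
move=> psi1; rewrite !indicE; case: (ratio_two_valued x) => rx.
  have gx0 := ratio_eq0 rx.
  rewrite rx (mem_set (gx0 : [set x | g x = 0] x)) memNset ?mulr0 ?add0r ?mulr1//=.
  by rewrite gx0 ltNge f_ge0.
have fx_gt0 : 0 < f x.
  rewrite lt_neqAle f_ge0 andbT eq_sym; apply/eqP => fx0.
  by move: rx; rewrite /density_ratio fx0 invr0 mulr0 => /esym/eqP; rewrite gt_eqF.
have gE : g x = rho * f x by rewrite -rx /density_ratio divfK ?gt_eqF.
rewrite rx (@memNset _ [set x | g x = 0]) ?mulr0 ?addr0 /=; last first.
  by rewrite gE => /eqP; rewrite mulf_eq0 !gt_eqF.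
have [->|rho_neq1] := eqVneq rho 1; first by rewrite psi1 mul0r.
by rewrite mem_set ?mulr1 //= gE ltr_pMl // lt_neqAle eq_sym rho_neq1 rho_ge1.
Qed.

Lemma integral_two_valued_ratio_Q psi : psi 1 = 0 ->
  (\int[Q]_x (psi (ratio x))%:E = Q [set x | (f x < g x)%R] * (psi rho)%:E)%E.
Proof.
move=> psi1; have mlt := measurable_f_lt_g.
have mB : measurable [set x | g x = 0].
  by rewrite -[X in measurable X]setTI; exact: mg (measurable_set1 0).
have QB : Q [set x | g x = 0] = 0%E.
  by rewrite QE // (eq_integral (fun _ => 0%E)) ?integral0 // => x /set_mem ->.
have int_indic c A : measurable A -> Q.-integrable setT (fun x => (c * \1_A x)%:E).
  by move=> mA; under eq_fun do rewrite EFinM; exact/integrableZl/integrable_indic.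
under eq_integral do rewrite two_valued_ratio_indicE // EFinD.
rewrite integralD ?int_indic//.
by rewrite !integralZl_indic_probability// QB mule0 adde0 muleC.
Qed.

End two_valued_ratio.

End likelihood_ratio.

Theorem proposition1 (d : measure_display) (X : measurableType d) (R : realType)
  (mu : {measure set X -> \bar R}) (P Q : probability X R) (f g : X -> R) (rho : R) :
  measurable_fun setT f -> measurable_fun setT g ->
  (forall x, 0 <= f x) -> (forall x, 0 <= g x) ->
  (forall A, measurable A -> P A = (\int[mu]_(x in A) (f x)%:E)%E) ->
  (forall A, measurable A -> Q A = (\int[mu]_(x in A) (g x)%:E)%E) ->
  1 <= rho ->
  (forall x, (dratio (g x) (f x) <= rho%:E)%E) ->
  (* (a) *)
  (forall psi : R -> R,
     {in `[0, +oo[ &, {homo psi : s t / s <= t}} -> psi 1 = 0 ->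
     (\int[Q]_x (psi (fine (dratio (g x) (f x))))%:E
        <= Q [set x | (f x < g x)%R] * (psi rho)%:E)%E) /\
  (* (b) *)
  (forall psi : R -> R,
     convex_function (`[0, +oo[%classic : set R^o) (psi : R^o -> R^o) ->
     (\int[P]_x (psi (fine (dratio (g x) (f x))))%:E
        <= (psi 0 + (psi rho - psi 0) / rho)%:E)%E) /\
  (* equality case *)
  ((forall x, dratio (g x) (f x) = 0%E \/ dratio (g x) (f x) = rho%:E) ->
   (forall psi : R -> R,
      {in `[0, +oo[ &, {homo psi : s t / s <= t}} -> psi 1 = 0 ->
      (\int[Q]_x (psi (fine (dratio (g x) (f x))))%:E
         = Q [set x | (f x < g x)%R] * (psi rho)%:E)%E) /\
   (forall psi : R -> R,
      convex_function (`[0, +oo[%classic : set R^o) (psi : R^o -> R^o) ->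
      (\int[P]_x (psi (fine (dratio (g x) (f x))))%:E
         = (psi 0 + (psi rho - psi 0) / rho)%:E)%E)).
Proof.
move=> mf mg f_ge0 g_ge0 PE QE rho_ge1 dratio_le.
have fineE := fine_dratio dratio_le.
have two_valued_ratio :
    (forall x, dratio (g x) (f x) = 0%E \/ dratio (g x) (f x) = rho%:E) ->
    forall x, density_ratio f g x = 0 \/ density_ratio f g x = rho.
  by move=> two_valued x; rewrite -fineE; case: (two_valued x) => ->; [left|right].
split; [|split; [|move=> /two_valued_ratio two_valued; split]] => psi;
  under eq_integral do rewrite fineE.
- exact: (integral_nondecreasing_ratio_le Q mf mg f_ge0 g_ge0 rho_ge1 dratio_le).
- exact: (integral_convex_ratio_le mf mg f_ge0 g_ge0 PE QE rho_ge1 dratio_le).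
- move=> _; apply: (integral_two_valued_ratio_Q mf mg f_ge0 QE) => //.
- move=> _; exact: (integral_two_valued_ratio_P mf mg f_ge0 g_ge0 PE QE).
Qed.
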